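(* Let $r\ge 3$ be an integer and for $k\in\mathbb Z_{\ge0}$ put $q_k=\frac{1+r^k(r-2)}{r-1}$. Then for every $n\ge1$, the set $S=\{t\cdot(1,r,r^2,\dots,r^{n-1}) : t\in\mathbb Z_{q_n}\}\subseteq\mathbb Z_{q_n}^n$ (arithmetic modulo $q_n$) is an independent set of size $q_n$ in $C_{q_{n-1},q_n}^{\boxtimes n}$.
   Context: For positive integers $q,d$ with $q\ge 2d$, the circular graph $C_{d,q}$ has vertex set $\mathbb Z_q$, two distinct vertices $x,y$ being adjacent iff $\min\{|x-y|,q-|x-y|\}<d$ (viewing $x,y$ as integers in $\{0,\dots,q-1\}$). For a graph $G=(V,E)$, $G^{\boxtimes n}$ has vertex set $V^n$, distinct $(u_i)$, $(v_i)$ adjacent iff for every $i$ either $u_i=v_i$ or $u_iv_i\in E$. An independent set is a set of pairwise non-adjacent vertices. *)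

From mathcomp Require Import all_boot.
Set Implicit Arguments. Unset Strict Implicit. Unset Printing Implicit Defensive.

(* q_k = (1 + r^k (r-2)) / (r-1); the division is exact for r >= 2. *)
Definition qk (r k : nat) : nat := (1 + r ^ k * (r - 2)) %/ (r - 1).

Definition ndist (x y : nat) : nat := (x - y) + (y - x).

(* circular graph C_{d,q} on Z_q = 'I_q (vertices viewed as 0..q-1) *)
Definition circ_adj (q d : nat) : rel 'I_q :=
  fun x y => (x != y) && (minn (ndist x y) (q - ndist x y) < d).

Definition strong_adj (T : finType) (e : rel T) (n : nat) : rel {ffun 'I_n -> T} :=
  fun u v => (u != v) && [forall i, (u i == v i) || e (u i) (v i)].

Definition independent (T : finType) (e : rel T) (S : {set T}) : Prop :=
  forall u v, u \in S -> v \in S -> ~~ e u v.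

Definition diag_set (q r n : nat) : {set {ffun 'I_n -> 'I_q}} :=
  [set f : {ffun 'I_n -> 'I_q} | [exists t : 'I_q, [forall i : 'I_n, (f i : nat) == (t * r ^ i) %% q]]].

Arguments circ_adj q d : clear implicits.
Arguments diag_set q r n : clear implicits.
Arguments strong_adj {T} e n.

From Stdlib Require Import ZArith Lia.
From mathcomp Require Import all_boot zify.

(* Write Q = q_n and d = q_(n-1).  The defining formula gives Q = r d - 1 and
   (r - 1) d = 1 + r^(n-1) (r - 2).  The points of S are the images of t in
   Z_Q, so S has Q elements (the first coordinate recovers t), and two points
   t, s of S are adjacent in the strong power iff every coordinate difference
   X r^i (X = t - s, i < n) lies within distance d of a multiple of Q.

   Take 0 < x < d and write
   x r^i = m_i Q + y_i with |y_i| < d.  Multiplying by r changes the quotient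
   by a carry in {-1, 0, 1}, and by induction m_i is a non-negative number
   congruent mod r - 1 to 0 when y_i > 0 and to 1 when y_i < 0 (a
   "signed digit").  At i = n - 1 this congruence is incompatible with the
   identity r^(n-1) ((r-1) x - m r (r-2)) = m + (r-1) y, which pins the left
   factor strictly between two consecutive multiples of r - 1.  Hence only
   X = 0 keeps its whole orbit close to multiples of Q, which is the
   independence of S. *)

Local Open Scope Z_scope.

Definition near (Q d z : Z) : Prop := exists m y, z = m * Q + y /\ -d < y < d.

Definition signed_digit (r m y : Z) : Prop :=
  (0 < y /\ exists c, 0 <= c /\ m = c * (r - 1)) \/
  (y < 0 /\ exists c, 0 <= c /\ m = c * (r - 1) + 1).

Lemma carry_bounds {Q : Z} : 0 < Q -> forall k a b, a * Q < k * Q < b * Q -> a < k < b.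
Proof. by move=> Q0 k a b [lo hi]; split; apply/(Z.mul_lt_mono_pos_r Q _ _ Q0). Qed.

(* One multiplication by r preserves the invariant: since Q = r d - 1 the
   carry r y - y' is -1, 0 or 1 times Q, and its value is forced by the
   signs of y and y'. *)
Lemma signed_digit_step {r d m y m' y' : Z} : 3 <= r ->
  r * (m * (r * d - 1) + y) = m' * (r * d - 1) + y' ->
  -d < y < d -> -d < y' < d -> signed_digit r m y -> signed_digit r m' y'.
Proof.
move=> r3 E y_bd y'_bd.
have rd : 0 <= (r - 3) * d by apply: Z.mul_nonneg_nonneg; lia.
have Q_pos : 0 < r * d - 1 by lia.
have [k Ek] : exists k, m' = r * m + k by exists (m' - r * m); lia.
have carry : r * y - y' = k * (r * d - 1) by rewrite Ek in E; lia.
case=> [[y_pos [c [c0 Em]]] | [y_neg [c [c0 Em]]]]; rewrite {}Ek {}Em;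
  have rc0 : 0 <= r * c by apply: Z.mul_nonneg_nonneg; lia.
- have ry_lo : 0 <= r * (y - 1) by apply: Z.mul_nonneg_nonneg; lia.
  have ry_hi : 0 <= r * (d - 1 - y) by apply: Z.mul_nonneg_nonneg; lia.
  have [k0 k1] : -1 < k < 2 by apply: (carry_bounds Q_pos); lia.
  have [k_val | k_val] : k = 0 \/ k = 1 by lia.
  + by left; split; [lia | exists (r * c); split; lia].
  + by right; split; [lia | exists (r * c); split; lia].
- have ry_hi : 0 <= r * (- 1 - y) by apply: Z.mul_nonneg_nonneg; lia.
  have ry_lo : 0 <= r * (y + d - 1) by apply: Z.mul_nonneg_nonneg; lia.
  have [k0 k1] : -2 < k < 1 by apply: (carry_bounds Q_pos); lia.
  have [k_val | k_val] : k = -1 \/ k = 0 by lia.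
  + by left; split; [lia | exists (r * c + 1); split; lia].
  + by right; split; [lia | exists (r * c + 1); split; lia].
Qed.

(* The invariant cannot hold at the last power P = r^(n-1) of the orbit of
   0 < x < d: with A = (r-1) x - m r (r-2) we get P A = m + (r-1) y and
   0 <= m < P, which puts A strictly between two consecutive multiples of
   r - 1 although A is congruent to m mod r - 1. *)
Lemma signed_digit_last {r d P x m y : Z} : 3 <= r -> 1 <= P ->
  (r - 1) * d = 1 + P * (r - 2) -> 0 < x < d ->
  x * P = m * (r * d - 1) + y -> -d < y < d -> ~ signed_digit r m y.
Proof.
move=> r3 P1 Ed x_bd E y_bd.
have rd : 3 * d <= r * d by apply: Z.mul_le_mono_nonneg_r; lia.
have Q_pos : 0 < r * d - 1 by lia.
have P_pos : 0 < P by lia.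
have r1_pos : 0 < r - 1 by lia.
have EQ : (r - 1) * (r * d - 1) = 1 + r * P * (r - 2).
  have : r * ((r - 1) * d) = r * (1 + P * (r - 2)) by rewrite Ed.
  lia.
have EA : P * ((r - 1) * x - m * r * (r - 2)) = m + (r - 1) * y.
  have : (r - 1) * (x * P) = (r - 1) * (m * (r * d - 1) + y) by rewrite E.
  have : m * ((r - 1) * (r * d - 1)) = m * (1 + r * P * (r - 2)) by rewrite EQ.
  lia.
set A := (r - 1) * x - m * r * (r - 2) in EA.
have m_lt_P : m < P.
  apply/(Z.mul_lt_mono_pos_r (r * d - 1) _ _ Q_pos).
  have : 0 <= (d - 1 - x) * P by apply: Z.mul_nonneg_nonneg; lia.
  have : 0 <= (P - 1) * d by apply: Z.mul_nonneg_nonneg; lia.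
  have : 0 <= (r - 3) * (P * d).
    by apply: Z.mul_nonneg_nonneg; [lia | apply: Z.mul_nonneg_nonneg; lia].
  lia.
case=> [[y_pos [c [c0 Em]]] | [y_neg [c [c0 Em]]]];
  have cr0 : 0 <= c * (r - 1) by apply: Z.mul_nonneg_nonneg; lia.
- have ry_lo : 0 <= (r - 1) * (y - 1) by apply: Z.mul_nonneg_nonneg; lia.
  have ry_hi : 0 <= (r - 1) * (d - 1 - y) by apply: Z.mul_nonneg_nonneg; lia.
  have [A_lo A_hi] : 0 < A < r - 1 by apply: (carry_bounds P_pos); lia.
  have [T_lo T_hi] : 0 < x - c * r * (r - 2) < 1.
    by apply: (carry_bounds r1_pos); rewrite /A Em in A_lo A_hi; lia.
  lia.
- have ry_hi : 0 <= (r - 1) * (- 1 - y) by apply: Z.mul_nonneg_nonneg; lia.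
  have ry_lo : 0 <= (r - 1) * (y + d - 1) by apply: Z.mul_nonneg_nonneg; lia.
  have [A_lo A_hi] : - (r - 2) < A < 1 by apply: (carry_bounds P_pos); lia.
  have [T_lo T_hi] : -1 < x - c * r * (r - 2) - (r - 1) < 0.
    by apply: (carry_bounds r1_pos); rewrite /A Em in A_lo A_hi; lia.
  lia.
Qed.

Lemma near_shift {Q d z : Z} (c : Z) : near Q d z -> near Q d (z + c * Q).
Proof. by case=> m [y [-> y_bd]]; exists (m + c), y; split; [ring | ]. Qed.

Lemma near_opp {Q d z : Z} : near Q d z -> near Q d (- z).
Proof. by case=> m [y [-> y_bd]]; exists (- m), (- y); split; [ring | lia]. Qed.

(* For 0 < x < d, some x r^i with i <= k is far from all multiples of
   Q = r d - 1: otherwise the invariant propagates up to i = k. *)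
Lemma pos_orbit_not_near {r d x : Z} {k : nat} : 3 <= r ->
  (r - 1) * d = 1 + r ^ Z.of_nat k * (r - 2) -> 0 < x < d ->
  ~ (forall i, (i <= k)%N -> near (r * d - 1) d (x * r ^ Z.of_nat i)).
Proof.
move=> r3 Ed x_bd near_i.
have digits i : (i <= k)%N -> exists m y, x * r ^ Z.of_nat i = m * (r * d - 1) + y
    /\ -d < y < d /\ signed_digit r m y.
  elim: i => [_ | i IH le_ik].
    exists 0, x; split; first by rewrite Z.pow_0_r; ring.
    by split; [lia | left; split; [lia | exists 0; lia]].
  have [m [y [E [y_bd dig]]]] := IH (ltnW le_ik).
  have [m' [y' [E' y'_bd]]] := near_i _ le_ik.
  exists m', y'; split=> //; split=> //.
  apply: (signed_digit_step r3 _ y_bd y'_bd dig).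
  by rewrite -E -E' Nat2Z.inj_succ Z.pow_succ_r; [ring | lia].
have [m [y [E [y_bd dig]]]] := digits k (leqnn k).
apply: (signed_digit_last r3 _ Ed x_bd E y_bd dig).
by have := Z.pow_pos_nonneg r (Z.of_nat k); lia.
Qed.

(* The arithmetic core: if |X| < Q = r d - 1 and all of X, X r, ..., X r^k
   are near multiples of Q, then X = 0.  Replacing X by its small
   representative y0 (and by -y0 if negative) reduces to the previous
   lemma; y0 = 0 forces X = 0 since |X| < Q. *)
Lemma near_orbit_zero {r d X : Z} {k : nat} : 3 <= r ->
  (r - 1) * d = 1 + r ^ Z.of_nat k * (r - 2) -> - (r * d - 1) < X < r * d - 1 ->
  (forall i, (i <= k)%N -> near (r * d - 1) d (X * r ^ Z.of_nat i)) -> X = 0.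
Proof.
move=> r3 Ed X_bd near_i.
have [m0 [y0 [E0 y0_bd]]] := near_i 0%N (leq0n k).
rewrite Z.pow_0_r Z.mul_1_r in E0.
have near_y0 i : (i <= k)%N -> near (r * d - 1) d (y0 * r ^ Z.of_nat i).
  move=> le_ik; have -> : y0 * r ^ Z.of_nat i =
    X * r ^ Z.of_nat i + (- (m0 * r ^ Z.of_nat i)) * (r * d - 1) by rewrite E0; ring.
  exact: near_shift (near_i i le_ik).
have [y0_neg | [y0_0 | y0_pos]] := Z.lt_trichotomy y0 0.
- exfalso; apply: (pos_orbit_not_near (x := - y0) r3 Ed); first by lia.
  move=> i le_ik; rewrite Z.mul_opp_l.
  exact: near_opp (near_y0 i le_ik).
- have [m0_lo m0_hi] : -1 < m0 < 1 by apply: (carry_bounds (Q := r * d - 1)); lia.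
  lia.
- by exfalso; apply: (pos_orbit_not_near r3 Ed _ near_y0); lia.
Qed.

Local Close Scope Z_scope.

Lemma qk_spec (r k : nat) : 2 <= r -> (r - 1) * qk r k = 1 + r ^ k * (r - 2).
Proof.
move=> r2; rewrite /qk.
suff [w ->] : exists w, 1 + r ^ k * (r - 2) = (r - 1) * w by rewrite mulKn //; lia.
elim: k => [|k [w IH]]; first by exists 1; rewrite expn0; lia.
exists (r * w - 1); rewrite expnS.
have : r * (1 + r ^ k * (r - 2)) = r * ((r - 1) * w) by rewrite IH.
nia.
Qed.

Lemma qk_succ (r k : nat) : 2 <= r -> qk r k.+1 = r * qk r k - 1.
Proof.
move=> r2; apply/eqP; rewrite -(eqn_pmul2l (_ : 0 < r - 1)); last by lia.
rewrite [X in _ == X]mulnBr muln1 mulnCA !qk_spec // expnS; apply/eqP.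
by rewrite -mulnA; move: (r ^ k * (r - 2)) => P; lia.
Qed.

Lemma qk_gt0 (r k : nat) : 2 <= r -> 0 < qk r k.
Proof. by move=> r2; have := qk_spec r k r2; case: (qk r k) => // ; rewrite muln0. Qed.

Lemma qk_specZ (r k : nat) : 2 <= r ->
  ((Z.of_nat r - 1) * Z.of_nat (qk r k) = 1 + Z.of_nat r ^ Z.of_nat k * (Z.of_nat r - 2))%Z.
Proof.
move=> r2; have := qk_spec r k r2.
have [s ->] : exists s, r = s + 2 by exists (r - 2); lia.
by rewrite addnK (_ : s + 2 - 1 = s + 1); lia.
Qed.

Section DiagonalSet.
Variables (Q r n : nat).

Definition diag_point (t : 'I_Q) : {ffun 'I_n -> 'I_Q} :=
  [ffun i : 'I_n => Ordinal (ltn_pmod (t * r ^ i) (leq_ltn_trans (leq0n t) (ltn_ord t)))].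

Lemma diag_setE : diag_set Q r n = [set diag_point t | t : 'I_Q].
Proof.
apply/setP => u; rewrite inE; apply/existsP/imsetP => [[t /forallP u_t] | [t _ ->]].
  by exists t => //; apply/ffunP => i; apply: val_inj; rewrite ffunE /= (eqP (u_t i)).
by exists t; apply/forallP => i; rewrite ffunE.
Qed.

(* The first coordinate of [diag_point t] is t, so the image has Q points. *)
Lemma card_diag_set : 0 < n -> #|diag_set Q r n| = Q.
Proof.
move=> n_gt0; rewrite diag_setE card_imset ?card_ord // => t s /ffunP/(_ (Ordinal n_gt0)).
by rewrite !ffunE => /(congr1 val) /=; rewrite expn0 !muln1 !modn_small //; apply: val_inj.
Qed.

Lemma close_near {d : nat} {a b : 'I_Q} : 0 < d -> (a == b) || circ_adj Q d a b ->
  near (Z.of_nat Q) (Z.of_nat d) (Z.of_nat a - Z.of_nat b).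
Proof.
move=> d_gt0 close; have a_lt := ltn_ord a; have b_lt := ltn_ord b.
case/orP: close => [/eqP -> | /andP [_]]; first by exists 0%Z, 0%Z; lia.
rewrite /ndist => close.
case: (ltnP (a - b + (b - a)) d) => short; first by exists 0%Z, (Z.of_nat a - Z.of_nat b)%Z; lia.
case: (leqP b a) => ba.
  by exists 1%Z, (Z.of_nat a - Z.of_nat b - Z.of_nat Q)%Z; lia.
by exists (-1)%Z, (Z.of_nat a - Z.of_nat b + Z.of_nat Q)%Z; lia.
Qed.

Lemma diag_adj_near {d : nat} {t s : 'I_Q} : 0 < d ->
  strong_adj (circ_adj Q d) n (diag_point t) (diag_point s) -> forall i : 'I_n,
  near (Z.of_nat Q) (Z.of_nat d) ((Z.of_nat t - Z.of_nat s) * Z.of_nat r ^ Z.of_nat i).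
Proof.
move=> d_gt0 /andP [_ /forallP adj] i.
have := close_near d_gt0 (adj i); rewrite !ffunE /=.
move: (divn_eq (t * r ^ i) Q) (divn_eq (s * r ^ i) Q).
move: (t * r ^ i %/ Q) (t * r ^ i %% Q) (s * r ^ i %/ Q) (s * r ^ i %% Q).
move=> qt mt qs ms Et Es close.
have -> : ((Z.of_nat t - Z.of_nat s) * Z.of_nat r ^ Z.of_nat i =
  Z.of_nat mt - Z.of_nat ms + (Z.of_nat qt - Z.of_nat qs) * Z.of_nat Q)%Z by lia.
exact: near_shift close.
Qed.

Lemma diag_set_independent (d : nat) : 0 < d ->
  (forall t s : 'I_Q, (forall i : 'I_n, near (Z.of_nat Q) (Z.of_nat d)
     ((Z.of_nat t - Z.of_nat s) * Z.of_nat r ^ Z.of_nat i)) -> t = s) ->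
  independent (strong_adj (circ_adj Q d) n) (diag_set Q r n).
Proof.
move=> d_gt0 far u v; rewrite diag_setE => /imsetP [t _ ->] /imsetP [s _ ->].
apply/negP => adj; move: (adj) => /andP [neq _].
by rewrite (far t s (diag_adj_near d_gt0 adj)) eqxx in neq.
Qed.

End DiagonalSet.

Theorem theorem9p3 (r n : nat) : 3 <= r -> 1 <= n ->
  independent (strong_adj (circ_adj (qk r n) (qk r n.-1)) n) (diag_set (qk r n) r n)
  /\ #|diag_set (qk r n) r n| = qk r n.
Proof.
move=> r3 n_gt0; have r2 : 2 <= r by lia.
split; last exact: card_diag_set.
apply: diag_set_independent (qk_gt0 r n.-1 r2) _ => t s near_ts.
have Q_eq : qk r n = r * qk r n.-1 - 1 by rewrite -qk_succ // prednK.
have QZ : Z.of_nat (qk r n) = (Z.of_nat r * Z.of_nat (qk r n.-1) - 1)%Z.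
  by have := qk_gt0 r n r2; lia.
apply/ord_inj/Nat2Z.inj/Z.sub_move_0_r.
apply: (near_orbit_zero (k := n.-1) _ (qk_specZ r n.-1 r2)); first by lia.
  by rewrite -QZ; have := ltn_ord t; have := ltn_ord s; lia.
move=> i le_i; rewrite -QZ.
have i_lt : i < n by lia.
exact: near_ts (Ordinal i_lt).
Qed.
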